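(* Let $\Omega\subset\mathbb{R}^n$ be open, $\omega$ a weight, $1\le p<q<\infty$, $a\in L^\infty(\Omega)$ non-negative, and $\varphi(x,t)=t^p+a(x)t^q$. Then $\varphi$ satisfies (A1)$_\omega$ if and only if there is a constant $C$ such that \[a(x)\le C\big(a(y)+\omega(B)^{\frac{q-p}{p}}\big)\] for every open ball $B$ and every $x,y\in B\cap\Omega$.
   Context: A weight is a nonnegative locally integrable function $\omega$ on $\mathbb{R}^n$, $\omega(E):=\int_E\omega\,dx$. (A1)$_\omega$: there is $\beta_1\in(0,1]$ such that $\varphi(x,\beta_1t)\le\varphi(y,t)$ for every open ball $B$ with $\omega(B)\le1$, a.e. $x,y\in B\cap\Omega$, and every $t\ge0$ with $\varphi(y,t)\in[1,1/\omega(B)]$. *)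

(* R^n is modelled as [n.-tuple R] with the library's
   product (= Borel) sigma-algebra; Lebesgue measure on it is defined below as the
   iterated product of one-dimensional Lebesgue measures. *)
From mathcomp Require Import all_boot all_order all_algebra.
From mathcomp Require Import all_classical all_reals all_analysis.
Set Implicit Arguments. Unset Strict Implicit. Unset Printing Implicit Defensive.
Import Order.TTheory GRing.Theory Num.Theory.
Local Open Scope classical_set_scope.
Local Open Scope ring_scope.

Section Defs.
Variable R : realType.

Fixpoint lebn (n : nat) : set (n.-tuple R) -> \bar R :=
  match n return set (n.-tuple R) -> \bar R with
  | 0 => fun A => (\1_A [tuple] : R)%:E
  | k.+1 => fun A =>
      ((@lebn k) \x (@lebesgue_measure R))%E
        [set p : k.-tuple R * R | A (cons_tuple p.2 p.1)]
  end.

Definition edist n (x y : n.-tuple R) : R :=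
  Num.sqrt (\sum_(i < n) (tnth x i - tnth y i) ^+ 2).

Definition eball n (x : n.-tuple R) (r : R) : set (n.-tuple R) :=
  [set y | edist x y < r].

Definition is_open_ball n (B : set (n.-tuple R)) : Prop :=
  exists x r, 0 < r /\ B = eball x r.

Definition open_Rn n (O : set (n.-tuple R)) : Prop :=
  forall x, O x -> exists r, 0 < r /\ eball x r `<=` O.

Definition wmeas n (w : n.-tuple R -> R) (E : set (n.-tuple R)) : \bar R :=
  (\int[@lebn n]_(x in E) (w x)%:E)%E.

Definition is_weight n (w : n.-tuple R -> R) : Prop :=
  (forall x, 0 <= w x) /\
  (forall x r, 0 < r -> (@lebn n).-integrable (eball x r) (EFin \o w)).

Definition Linfty n (O : set (n.-tuple R)) (a : n.-tuple R -> R) : Prop :=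
  measurable_fun O a /\
  exists M : R, {ae @lebn n, forall x, O x -> `|a x| <= M}.

(* condition (A1)_omega for phi : R^n -> [0,oo) -> R on O.
   "phi(y,t) \in [1, 1/omega(B)]" is written as 1 <= phi(y,t) and
   phi(y,t) * omega(B) <= 1 (so that omega(B) = 0 gives [1,oo)). *)
Definition A1w n (w : n.-tuple R -> R) (O : set (n.-tuple R))
    (phi : n.-tuple R -> R -> R) : Prop :=
  exists beta1 : R, 0 < beta1 <= 1 /\
  forall B, is_open_ball B -> (wmeas w B <= 1)%E ->
    {ae @lebn n, forall x, (B `&` O) x ->
      {ae @lebn n, forall y, (B `&` O) y ->
        forall t : R, 0 <= t -> 1 <= phi y t ->
          ((phi y t)%:E * wmeas w B <= 1)%E ->
          phi x (beta1 * t) <= phi y t}}.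

Definition double_phase n (p q : R) (a : n.-tuple R -> R) :
    n.-tuple R -> R -> R :=
  fun x t => t `^ p + a x * t `^ q.

End Defs.

(* With k := (q - p) / p and T := t^p, the phase reads
   phi(x, t) = T + a(x) T^(1 + k).
   If a(x) <= C (a(y) + w(B)^k), then on the range phi(y, t) w(B) <= 1 we have
   w(B)^k t^q <= t^p, hence phi(x, beta t) <= beta (1 + C) phi(y, t) for
   beta <= 1, and beta1 := 1 / (1 + C) works.
   Conversely, on balls with w(B) <= 1/2, (A1) tested at the T with
   T^(-k) = 2^k v for v > a(y) + w(B)^k (at T = 1 if that T is < 1), or, when
   a(y) > 1, at the T with a(y) T^(1+k) = 1, yields
   beta1^q a(x) <= (2^k + 2) (a(y) + w(B)^k); on balls
   with w(B) > 1/2 we have 2^k w(B)^k >= 1 and the bound follows from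
   a \in L^oo. *)

From mathcomp Require Import all_boot all_order all_algebra.
From mathcomp Require Import all_classical all_reals all_analysis.
From mathcomp Require Import ring lra.
Import Order.TTheory GRing.Theory Num.Theory.
Local Open Scope classical_set_scope.
Local Open Scope ring_scope.

Section powR_extra.
Context {R : realType}.

Lemma gt0_ler_powR (r : R) : 0 < r ->
  {in Num.nneg &, {mono (@powR R) ^~ r : x y / x <= y}}.
Proof. by move=> r0; apply: le_mono_in; exact: gt0_ltr_powR. Qed.

Lemma powR_invK (x r : R) : 0 <= x -> r != 0 -> (x `^ r^-1) `^ r = x.
Proof. by move=> x0 r0; rewrite -powRrM mulVf // powRr1. Qed.

Lemma powR1Dr (x r : R) : 0 < x -> x `^ (1 + r) = x * x `^ r.
Proof. by move=> x0; rewrite powRD ?powRr1 ?(ltW x0) ?(gt_eqF x0) ?implybT. Qed.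

End powR_extra.

Lemma infinite_set_neq0 (R : numFieldType) : infinite_set [set x : R | x != 0].
Proof.
apply/infiniteP/(@pcard_leP nat R^o)/injfunPex.
exists (fun n : nat => n.+1%:R : R).
- by move=> n _ /=; rewrite pnatr_eq0.
- by move=> m n _ _ /= /eqP; rewrite eqr_nat => /eqP [].
Qed.

Section setfun_integral.
Context d (T : measurableType d) (R : realType) (mu : set T -> \bar R).
Local Open Scope ereal_scope.

(* Without [mu set0 = 0] all the summands [x * mu set0], [x != 0], may be
   nonzero; the sum then has infinite support and defaults to [0]. *)
Lemma sintegral0_setfun : sintegral mu (cst 0%R) = 0.
Proof.
have preim0 (x : R) : x != 0%R -> cst 0%R @^-1` [set x] = set0 :> set T.
  move=> x0; rewrite preimage_cst ifF //; apply/negbTE.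
  by rewrite notin_setE => /= /esym; apply/eqP.
have [mu0|mu0] := eqVneq (mu set0) 0.
  apply: fsbig1 => x _; have [->|x0] := eqVneq x 0%R; first by rewrite mul0e.
  by rewrite preim0 // mu0 mule0.
apply: fsbig_dflt; apply: sub_infinite_set (infinite_set_neq0 R) => x /= x0.
by split => //=; rewrite preim0 //; apply/eqP; rewrite mule_eq0 negb_or eqe x0.
Qed.

Import HBNNSimple.

Lemma integral_ge0_setfun D (f : T -> \bar R) :
  (forall x, D x -> 0 <= f x) -> 0 <= \int[mu]_(x in D) f x.
Proof.
move=> f0; rewrite /integral; set g := f \_ D.
have g0 x : 0 <= g x by rewrite /g /patch; case: ifP => // /[1!inE] /f0.
have g_neg0 x : g^\- x = 0 by rewrite (@ge0_funenegE _ _ setT) ?in_setT.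
have sintegral_le0 : [set sintegral mu h | h in [set h : {nnsfun T >-> R} |
    forall x, (h x)%:E <= g^\- x]] = [set 0].
  apply/seteqP; split => [_ [h /= h_le <-]|_ ->] /=.
    suff -> : h = cst 0%R :> (T -> R) by exact: sintegral0_setfun.
    apply/funext => x; apply/eqP; rewrite eq_le fun_ge0 andbT -lee_fin.
    by rewrite (le_trans (h_le x)) // g_neg0.
  exists nnsfun0; last exact: sintegral0_setfun.
  by move=> x /=; rewrite funeneg_ge0.
rewrite sintegral_le0 ereal_sup1 sube0.
apply: ereal_sup_ubound; exists nnsfun0; last exact: sintegral0_setfun.
by move=> x /=; rewrite funepos_ge0.
Qed.

End setfun_integral.

Lemma aeS_setfun d (T : semiRingOfSetsType d) (R : realFieldType)
    (mu : set T -> \bar R) (P Q : T -> Prop) : (forall x, P x -> Q x) ->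
  {ae mu, forall x, P x} -> {ae mu, forall x, Q x}.
Proof.
move=> PQ [N [mN N0 notP_N]]; exists N; split => // x /= notQx.
by apply: notP_N => /PQ.
Qed.

Section weight.
Context {R : realType} {n : nat}.
Implicit Types (w : n.-tuple R -> R) (B : set (n.-tuple R)).

Lemma wmeas_ge0 w B : (forall x, 0 <= w x) -> (0 <= wmeas w B)%E.
Proof. by move=> w0; apply: integral_ge0_setfun => x _; rewrite lee_fin. Qed.

Lemma wmeas_ball_fineK {w B} : is_weight w -> is_open_ball B ->
  (fine (wmeas w B))%:E = wmeas w B.
Proof.
move=> [w0 w_int] [x [r [r0 ->]]]; rewrite fineK // ge0_fin_numE ?wmeas_ge0 //.
have /integrableP[_] := w_int x r r0.
by under eq_fun do rewrite /= ger0_norm //.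
Qed.

Lemma mule_wmeas_ball_le1 {w B} (r : R) : is_weight w -> is_open_ball B ->
  (r%:E * wmeas w B <= 1)%E = (r * fine (wmeas w B) <= 1).
Proof.
by move=> w_weight ballB; rewrite -[in LHS](wmeas_ball_fineK w_weight ballB).
Qed.

End weight.

Section double_phase.
Context {R : realType} {p q : R}.
Hypotheses (p_ge1 : 1 <= p) (p_lt_q : p < q).

Local Notation k := ((q - p) / p).
Local Notation phi b t := (t `^ p + b * t `^ q).

Let p_neq0 : p != 0. Proof. by rewrite gt_eqF // (lt_le_trans ltr01). Qed.

Lemma double_phase_gap_gt0 : 0 < k.
Proof. by rewrite divr_gt0 ?subr_gt0 // (lt_le_trans ltr01). Qed.

Lemma powR_qE (t : R) : 0 <= t -> t `^ q = t `^ p * (t `^ p) `^ k.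
Proof.
have e : p + p * k = q by field.
have q0 : 0 < q by rewrite (lt_trans _ p_lt_q) // (lt_le_trans ltr01).
by move=> t0; rewrite -powRrM -powRD e // gt_eqF.
Qed.

Lemma powR_gap_le (s t : R) : 0 <= s -> 0 <= t -> s * t `^ p <= 1 ->
  s `^ k * t `^ q <= t `^ p.
Proof.
move=> s0 t0 st1; have k0 := double_phase_gap_gt0.
rewrite powR_qE // mulrCA -powRM ?powR_ge0 // ler_piMr ?powR_ge0 //.
have := @ge0_ler_powR R k (ltW k0) (s * t `^ p) 1; rewrite powR1.
by apply; rewrite // nnegrE ?mulr_ge0 ?powR_ge0.
Qed.

(* (A1) for a frozen pair of points: b = a(y), A = a(x), s = w(B). *)
Definition A1_coef (b A beta s : R) := forall t, 0 <= t ->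
  1 <= phi b t -> phi b t * s <= 1 -> phi A (beta * t) <= phi b t.

Lemma bound_A1_coef (C beta b A s : R) : 0 <= C -> 0 < beta ->
  beta * (1 + C) <= 1 -> 0 <= b -> 0 <= A -> 0 <= s ->
  A <= C * (b + s `^ k) -> A1_coef b A beta s.
Proof.
move=> C0 beta0 betaC b0 A0 s0 AC t t0 _ phis.
have beta1 : 0 < beta <= 1 by apply/andP; split => //; nra.
have tp0 := powR_ge0 t p; have tq0 := powR_ge0 t q.
have gap : s `^ k * t `^ q <= t `^ p.
  by apply: powR_gap_le => //; have := mulr_ge0 (mulr_ge0 b0 tq0) s0; nra.
have betap : beta `^ p <= beta by exact: ge1r_powR.
have betaq : beta `^ q <= beta.
  by apply: ge1r_powR => //; exact: le_trans p_ge1 (ltW p_lt_q).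
have sk0 := powR_ge0 s k.
rewrite !powRM ?(ltW beta0) //.
have h1 : beta `^ p * t `^ p <= beta * t `^ p by rewrite ler_wpM2r.
have h2 : A * (beta `^ q * t `^ q) <= beta * (A * t `^ q).
  by rewrite mulrCA ler_wpM2r // mulr_ge0.
have h3 : A * t `^ q <= C * (b * t `^ q) + C * t `^ p.
  have : A * t `^ q <= C * (b + s `^ k) * t `^ q by rewrite ler_wpM2r.
  have : C * (s `^ k * t `^ q) <= C * t `^ p by rewrite ler_wpM2l.
  nra.
have h4 : beta * (C * (b * t `^ q)) <= b * t `^ q.
  by rewrite mulrA ler_piMl ?mulr_ge0 //; nra.
nra.
Qed.

Section coef_bound.
Context {b A beta s : R}.

Lemma A1_test_point (T : R) : 0 <= beta -> A1_coef b A beta s -> 0 < T ->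
  1 <= T + b * (T * T `^ k) -> (T + b * (T * T `^ k)) * s <= 1 ->
  A * beta `^ q <= (T `^ k)^-1 + b.
Proof.
move=> beta0 A1_bs T0 phi1 phis.
set t := T `^ p^-1.
have tp : t `^ p = T by rewrite powR_invK // ltW.
have tq : t `^ q = T * T `^ k by rewrite powR_qE ?powR_ge0 // tp.
have := A1_bs t (powR_ge0 _ _); rewrite tp tq => /(_ phi1 phis).
rewrite !powRM ?powR_ge0 // tp tq => A1T.
have Tk0 : 0 < T `^ k by exact: powR_gt0.
rewrite -(ler_pM2r (mulr_gt0 T0 Tk0)).
have -> : ((T `^ k)^-1 + b) * (T * T `^ k) = T + b * (T * T `^ k).
  by field; rewrite gt_eqF.
have := mulr_ge0 (powR_ge0 beta p) (ltW T0); lra.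
Qed.

Lemma A1_coef_bound_large : 0 <= beta -> A1_coef b A beta s ->
  0 <= s -> s <= 2^-1 -> 1 < b -> A * beta `^ q <= 2 * b.
Proof.
move=> beta0 A1_bs s0 s_half b1.
have k0 := double_phase_gap_gt0.
have k1 : 0 < 1 + k by lra.
set T := b^-1 `^ (1 + k)^-1.
have T0 : 0 < T by rewrite powR_gt0 // invr_gt0; lra.
have TTk : T * T `^ k = b^-1.
  by rewrite -powR1Dr // powR_invK ?gt_eqF // invr_ge0; lra.
have T1 : T <= 1.
  rewrite -(gt0_ler_powR _ k1) ?nnegrE ?(ltW T0) //.
  by rewrite powR1Dr // TTk powR1 invf_le1 //; lra.
have bTTk : b * (T * T `^ k) = 1 by rewrite TTk mulfV // gt_eqF //; lra.
have Tk_inv : (T `^ k)^-1 = b * T.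
  have Tk0 : T `^ k != 0 by rewrite gt_eqF // powR_gt0.
  apply: (mulIf Tk0); rewrite mulVf // -mulrA TTk mulfV // gt_eqF //; lra.
have : A * beta `^ q <= (T `^ k)^-1 + b.
  by apply: A1_test_point => //; rewrite bTTk; nra.
rewrite Tk_inv; nra.
Qed.

Lemma A1_coef_bound_small (v : R) : 0 <= beta -> A1_coef b A beta s ->
  0 <= b -> 0 <= s -> s <= 2^-1 -> b <= 1 -> 0 < v -> b + s `^ k <= v ->
  A * beta `^ q <= 2 `^ k * v + b.
Proof.
move=> beta0 A1_bs b0 s0 s_half b1 v0 bsv.
have k0 := double_phase_gap_gt0.
have c1 : 1 <= 2 `^ k.
  have := @ge0_ler_powR R k (ltW k0) 1 2; rewrite powR1.
  by apply; rewrite ?nnegrE //; lra.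
have sk0 := powR_ge0 s k.
have [cv1|cv1] := ltrP 1 (2 `^ k * v).
  have : A * beta `^ q <= (1 `^ k)^-1 + b.
    by apply: A1_test_point => //; rewrite powR1 !mulr1; nra.
  by rewrite powR1 invr1; nra.
set T := (2 `^ k * v)^-1 `^ k^-1.
have cv0 : 0 < 2 `^ k * v by rewrite mulr_gt0 //; lra.
have Tk : T `^ k = (2 `^ k * v)^-1 by rewrite powR_invK ?invr_ge0 ?ltW ?gt_eqF.
have T0 : 0 < T by rewrite powR_gt0 // invr_gt0.
have T1 : 1 <= T.
  rewrite -(gt0_ler_powR _ k0) ?nnegrE ?(ltW T0) // powR1 Tk invf_ge1 //.
have bTk : b * T `^ k <= 1.
  by rewrite Tk ler_pdivrMr // mul1r; nra.
have sT : 2 * s * T <= 1.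
  rewrite -(gt0_ler_powR _ k0) ?nnegrE ?mulr_ge0 ?(ltW T0) // powR1.
  rewrite !powRM ?mulr_ge0 ?(ltW T0) // Tk.
  have -> : 2 `^ k * s `^ k * (2 `^ k * v)^-1 = s `^ k / v.
    by field; rewrite !gt_eqF ?powR_gt0.
  by rewrite ler_pdivrMr // mul1r; lra.
rewrite -[2 `^ k * v]invrK -Tk; apply: A1_test_point => //.
  have := mulr_ge0 b0 (mulr_ge0 (ltW T0) (powR_ge0 T k)); lra.
have -> : (T + b * (T * T `^ k)) * s = s * T * (1 + b * T `^ k) by ring.
have := mulr_ge0 b0 (powR_ge0 T k); have := mulr_ge0 s0 (ltW T0); nra.
Qed.

Lemma A1_coef_bound : 0 <= beta -> A1_coef b A beta s ->
  0 <= b -> 0 <= s -> s <= 2^-1 ->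
  A * beta `^ q <= (2 `^ k + 2) * (b + s `^ k).
Proof.
move=> beta0 A1_bs b0 s0 s_half.
have c0 : 0 < 2 `^ k by rewrite powR_gt0.
have sk0 := powR_ge0 s k.
have [b1|b1] := ltrP 1 b.
  by apply: le_trans (A1_coef_bound_large beta0 A1_bs s0 s_half b1) _; nra.
apply/ler_addgt0Pr => e e0.
have ec0 : 0 < e / 2 `^ k by rewrite divr_gt0.
have : A * beta `^ q <= 2 `^ k * (b + s `^ k + e / 2 `^ k) + b.
  by apply: A1_coef_bound_small => //; rewrite ?lerDl; lra.
rewrite mulrDr [_ * (e / _)]mulrC divfK ?gt_eqF //; nra.
Qed.

End coef_bound.
End double_phase.

Arguments A1_coef {R} p q b A beta s.

Section double_phase_A1w.
Variables (R : realType) (n : nat) (O : set (n.-tuple R)).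
Variables (w : n.-tuple R -> R) (p q : R) (a : n.-tuple R -> R).
Hypotheses (w_weight : is_weight w) (p_ge1 : 1 <= p) (p_lt_q : p < q).
Hypotheses (a_Linfty : Linfty O a) (a_ge0 : forall x, O x -> 0 <= a x).

Local Notation k := ((q - p) / p).

Let wmeas_fine_ge0 B : 0 <= fine (wmeas w B).
Proof. by apply: fine_ge0; apply: wmeas_ge0; case: w_weight. Qed.

Lemma A1w_double_phase_coef_bound : A1w w O (double_phase p q a) ->
  exists C : R, forall B, is_open_ball B ->
    {ae @lebn R n, forall x, (B `&` O) x ->
      {ae @lebn R n, forall y, (B `&` O) y ->
        a x <= C * (a y + fine (wmeas w B) `^ k)}}.
Proof.
move=> [beta [/andP[beta0 _] A1_B]].
have [_ [M a_le_M]] := a_Linfty.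
have k0 := double_phase_gap_gt0 p_ge1 p_lt_q.
set c := 2 `^ k; set M' := Num.max M 0.
have betaq0 : 0 < beta `^ q by rewrite powR_gt0.
have M'0 : 0 <= M' by rewrite le_max lexx orbT.
exists ((c + 2) * ((beta `^ q)^-1 + M')) => B ballB.
set s := fine (wmeas w B).
have s0 : 0 <= s := wmeas_fine_ge0 B.
have sk0 := powR_ge0 s k.
have c0 : 0 < c by rewrite powR_gt0.
have [s_half|s_half] := lerP s 2^-1.
- have wB1 : (wmeas w B <= 1)%E.
    by rewrite -(wmeas_ball_fineK w_weight ballB) lee_fin -/s; lra.
  apply: aeS_setfun (A1_B B ballB wB1) => x A1_x BOx.
  apply: aeS_setfun (A1_x BOx) => y A1_xy BOy.
  have A1_ayax : A1_coef p q (a y) (a x) beta s.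
    by move=> t t0 phi1 phis; apply: A1_xy; rewrite ?mule_wmeas_ball_le1.
  have Y_le := A1_coef_bound p_ge1 p_lt_q (ltW beta0) A1_ayax
    (a_ge0 _ BOy.2) s0 s_half.
  rewrite -(ler_pM2r betaq0); apply: le_trans Y_le _.
  have -> : (c + 2) * ((beta `^ q)^-1 + M') * (a y + s `^ k) * beta `^ q =
      (c + 2) * (a y + s `^ k) * (1 + M' * beta `^ q).
    by field; rewrite gt_eqF.
  rewrite ler_peMr ?mulr_ge0 ?addr_ge0 ?(a_ge0 _ BOy.2) //.
  by rewrite lerDl mulr_ge0 // ltW.
- apply: aeS_setfun (a_le_M) => x ax_le_M BOx.
  (* [lebn] is not a [{measure}], so [aeW] is unavailable: the null set of
     [a_le_M] serves for the inner statement, which holds everywhere. *)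
  apply: aeS_setfun a_le_M => y _ BOy.
  have ax_le_M' : a x <= M'.
    rewrite (le_trans (ler_norm _)) //.
    by rewrite (le_trans (ax_le_M BOx.2)) // le_max lexx.
  have csk1 : 1 <= c * s `^ k.
    rewrite -powRM; try lra.
    have := @ge0_ler_powR R k (ltW k0) 1 (2 * s); rewrite powR1.
    by apply; rewrite ?nnegrE; lra.
  apply: (le_trans ax_le_M'); apply: (@le_trans _ _ (M' * (c * s `^ k))).
    by rewrite ler_peMr.
  rewrite mulrA; apply: ler_pM => //.
  - by rewrite mulr_ge0 // ltW.
  - by rewrite mulrC ler_pM ?lerDl ?lerDr ?invr_ge0 ?(ltW c0) ?(ltW betaq0).
  - by rewrite lerDr (a_ge0 _ BOy.2).
Qed.

Lemma double_phase_coef_bound_A1w : (exists C : R, forall B, is_open_ball B ->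
    {ae @lebn R n, forall x, (B `&` O) x ->
      {ae @lebn R n, forall y, (B `&` O) y ->
        a x <= C * (a y + fine (wmeas w B) `^ k)}}) ->
  A1w w O (double_phase p q a).
Proof.
move=> [C C_B]; set C' := Num.max C 0.
have C'0 : 0 <= C' by rewrite le_max lexx orbT.
have CC' : C <= C' by rewrite le_max lexx.
have C'1 : 0 < 1 + C' by lra.
exists (1 + C')^-1; split.
  by rewrite invr_gt0 C'1 invf_le1 //=; lra.
move=> B ballB _.
apply: aeS_setfun (C_B B ballB) => x C_x BOx.
apply: aeS_setfun (C_x BOx) => y C_xy BOy.
have A1_yx : A1_coef p q (a y) (a x) (1 + C')^-1 (fine (wmeas w B)).
  apply: (bound_A1_coef p_ge1 p_lt_q C') => //.
  - by rewrite invr_gt0.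
  - by rewrite mulVf // gt_eqF.
  - exact: a_ge0 _ BOy.2.
  - exact: a_ge0 _ BOx.2.
  - apply: le_trans (C_xy BOy) _; apply: ler_wpM2r => //.
    by rewrite addr_ge0 ?powR_ge0 // (a_ge0 _ BOy.2).
by move=> t t0 phi1; rewrite mule_wmeas_ball_le1 //; exact: A1_yx.
Qed.

End double_phase_A1w.

Theorem lemma5p9 (R : realType) (n : nat) (O : set (n.-tuple R))
    (w : n.-tuple R -> R) (p q : R) (a : n.-tuple R -> R) :
  (0 < n)%N ->
  open_Rn O ->
  is_weight w ->
  1 <= p -> p < q ->
  Linfty O a -> (forall x, O x -> 0 <= a x) ->
  A1w w O (double_phase p q a) <->
  exists C : R,
    forall B, is_open_ball B ->
      {ae @lebn R n, forall x, (B `&` O) x ->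
        {ae @lebn R n, forall y, (B `&` O) y ->
          a x <= C * (a y + fine (wmeas w B) `^ ((q - p) / p))}}.
Proof.
move=> _ _ w_weight p_ge1 p_lt_q a_Linfty a_ge0; split.
- exact: A1w_double_phase_coef_bound.
- exact: double_phase_coef_bound_A1w.
Qed.
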